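(* Assume $X_0\in L^\infty$ and $x\in\mathbb{R}$. Then $X^*$ is beating-performance-variance (BPV) efficient in $\mathscr{X}(x)$ if and only if $X^*$ is variance-minimal in $\mathscr{X}_{\mathrm{icx}}(x,X_0+z)$ for some $z\ge \frac{x}{\mathrm{E}[\rho]}-Q_0(1)$.
   Context: $(\Omega,\mathcal{F},\mathbb{P})$ is a complete nonatomic probability space. $\rho\in L^2$ with $\mathbb{P}(\rho>0)=1$ and $\mathrm{Var}[\rho]>0$. For a random variable $X$, $Q_X(t)=\inf\{y:\mathbb{P}(X\le y)>t\}$ for $t\in[0,1)$, $Q_X(1):=\lim_{t\uparrow1}Q_X(t)$; $Q_0:=Q_{X_0}$. For random variables $X,Y$, $X\succeq_{\mathrm{icx}}Y$ means $\mathrm{E}[f(X)]\ge\mathrm{E}[f(Y)]$ for all increasing convex $f$ (equivalently $\int_t^1Q_X\ge\int_t^1Q_Y$ for all $t\in[0,1]$). $\mathscr{X}(x)=\{X\in L^2:\mathrm{E}[\rho X]\le x\}$; $\mathscr{X}_{\mathrm{icx}}(x,Y_0)=\{X\in L^2:\mathrm{E}[\rho X]\le x,\ X\succeq_{\mathrm{icx}}Y_0\}$, and $X$ is variance-minimal in it if it minimizes $\mathrm{Var}[X]$ over it. The beating performance of $X\in L^2$ is $\psi(X)=\sup\{m\in\mathbb{R}: X-m\succeq_{\mathrm{icx}}X_0\}$ (with $\sup\emptyset=-\infty$). $X\in\mathscr{X}(x)$ is BPV efficient in $\mathscr{X}(x)$ if there is no $Y\in\mathscr{X}(x)$ with $\psi(Y)\ge\psi(X)$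 and $\mathrm{Var}[Y]\le\mathrm{Var}[X]$ with at least one inequality strict. *)

From HB Require Import structures.
From mathcomp Require Import all_boot all_order all_algebra.
From mathcomp Require Import all_classical all_reals all_analysis.
Set Implicit Arguments. Unset Strict Implicit. Unset Printing Implicit Defensive.
Import Order.TTheory GRing.Theory Num.Theory.
Import numFieldNormedType.Exports.
Local Open Scope classical_set_scope.
Local Open Scope ring_scope.

Section defs.
Context {R : realType} {d : measure_display} {T : measurableType d}.
Variable P : probability T R.

Definition nonatomic : Prop :=
  forall A : set T, measurable A -> (0 < P A)%E ->
    exists B : set T, [/\ measurable B, B `<=` A, (0 < P B)%E & (P B < P A)%E].

Definition L2 (X : T -> R) : Prop :=
  measurable_fun setT X /\ P.-integrable setT (fun w => (X w ^+ 2)%:E).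

Definition Linfty (X : T -> R) : Prop :=
  measurable_fun setT X /\ exists M : R, {ae P, forall w, `|X w| <= M}.

Definition quantile (X : T -> R) (t : R) : R :=
  inf [set y : R | (t%:E < P [set w | (X w <= y)%R])%E].

(* Q_X(1) := lim_{t -> 1^-} Q_X(t) *)
Definition quantile1 (X : T -> R) : R :=
  lim (quantile X t @[t --> (1:R)^'-]).

Definition increasing_convex (f : R -> R) : Prop :=
  (forall u v, u <= v -> f u <= f v) /\
  (forall u v (l : R), 0 <= l <= 1 ->
     f (l * u + (1 - l) * v) <= l * f u + (1 - l) * f v).

Definition icx_ge (X Y : T -> R) : Prop :=
  forall f : R -> R, increasing_convex f ->
    ('E_P[f \o Y] <= 'E_P[f \o X])%E.

Definition budget (rho : T -> R) (x : R) : set (T -> R) :=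
  [set X | L2 X /\ ('E_P[rho \* X] <= x%:E)%E].

Definition budget_icx (rho : T -> R) (x : R) (Y0 : T -> R) : set (T -> R) :=
  [set X | L2 X /\ ('E_P[rho \* X] <= x%:E)%E /\ icx_ge X Y0].

Definition variance_minimal (S : set (T -> R)) (X : T -> R) : Prop :=
  S X /\ forall Y, S Y -> ('V_P[X] <= 'V_P[Y])%E.

(* beating performance psi(X) = sup {m : X - m >=_icx X0}, sup of empty = -oo *)
Definition beating_perf (X0 X : T -> R) : \bar R :=
  ereal_sup [set m%:E | m in [set m : R | icx_ge (X \- cst m) X0]].

Definition BPV_efficient (rho : T -> R) (x : R) (X0 X : T -> R) : Prop :=
  budget rho x X /\
  ~ exists Y, [/\ budget rho x Y,
      (beating_perf X0 X <= beating_perf X0 Y)%E,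
      ('V_P[Y] <= 'V_P[X])%E &
      ((beating_perf X0 X < beating_perf X0 Y)%E \/ ('V_P[Y] < 'V_P[X])%E)].

End defs.

From HB Require Import structures.
From mathcomp Require Import all_boot all_order all_algebra.
From mathcomp Require Import all_classical all_reals all_analysis.
From mathcomp Require Import measurable_realfun.
From mathcomp Require Import ring lra.
Import Order.TTheory GRing.Theory Num.Theory.
Import numFieldNormedType.Exports.
Local Open Scope classical_set_scope.
Local Open Scope ring_scope.

(* The beating performance psi(Y) is the largest shift m with Y - m >=_icx X0.
   As X0 is bounded, this supremum is attained (by convexity, shifting X0 down
   by d changes E[f(X0)] by O(d)), so psi(Y) >= z says exactly that Y lies in
   X_icx(x, X0 + z).  The constant x / E[rho] is affordable, has zero
   variance, and dominates X0 - Q0(1) in the icx order because Q0(1) is the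
   essential supremum of X0; so an efficient Xstar has
   psi(Xstar) >= x / E[rho] - Q0(1), and z := psi(Xstar) works.  Conversely,
   let Xstar be variance-minimal for such a z and suppose Y dominates it.
   Then psi(Y) > z, i.e. Y - m >=_icx X0 for some m > z.  If Var Y = 0, this
   forces m <= x / E[rho] - Q0(1) <= z; otherwise (1 - l) Y + l x / E[rho]
   stays affordable and in X_icx(x, X0 + z) for small l > 0 while having
   smaller variance than Y. *)

Section increasing_convex.
Context {R : realType}.
Implicit Types (f : R -> R) (a b c u : R).

Lemma increasing_convex_le {f u v} : increasing_convex f -> u <= v -> f u <= f v.
Proof. by case=> + _; apply. Qed.

Lemma increasing_convex_id : increasing_convex (@id R).
Proof. by split=> // u v l _; rewrite lexx. Qed.

Lemma increasing_convex_excess (k : R) :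
  increasing_convex (fun u => Num.max (u - k) 0).
Proof.
split=> [u v uv|u v l /andP[l0 l1]]; first by apply: le_max2; rewrite ?lerB.
have l1' : 0 <= 1 - l by rewrite subr_ge0.
rewrite ge_max addr_ge0 ?mulr_ge0 ?le_max ?lexx ?orbT// andbT.
rewrite (_ : l * u + (1 - l) * v - k = l * (u - k) + (1 - l) * (v - k)); last by ring.
by rewrite lerD// ler_wpM2l// le_max lexx.
Qed.

Lemma increasing_convex_affine {f} a b : increasing_convex f -> 0 <= a ->
  increasing_convex (fun u => f (a * u + b)).
Proof.
move=> [nd cv] a0; split=> [u v uv|u v l l01]; first by rewrite nd// lerD2r ler_wpM2l.
rewrite (_ : a * _ + b = l * (a * u + b) + (1 - l) * (a * v + b)); last by ring.
exact: cv.
Qed.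

Lemma increasing_convex_chord {f a b c} : increasing_convex f -> a <= b <= c ->
  (c - a) * f b <= (c - b) * f a + (b - a) * f c.
Proof.
move=> [_ cv] /andP[ab bc]; have [ac|ca] := ltrP a c; last first.
  have [-> -> ->] : [/\ c - a = 0, c - b = 0 & b - a = 0] by split; lra.
  by rewrite !mul0r addr0.
have ca0 : c - a != 0 by rewrite subr_eq0 gt_eqF.
pose l := (c - b) / (c - a).
have l01 : 0 <= l <= 1.
  by rewrite /l divr_ge0 ?subr_ge0 ?(ltW ac)//= ler_pdivrMr ?subr_gt0// mul1r lerD2l lerN2.
have := cv a c l l01; rewrite (_ : l * a + (1 - l) * c = b); last by rewrite /l; field.
have ca : 0 <= c - a by rewrite subr_ge0 ltW.
move/(ler_wpM2l ca).
by rewrite (_ : (c - a) * (l * f a + (1 - l) * f c) = (c - b) * f a + (b - a) * f c) // /l; field.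
Qed.

Lemma increasing_convex_shiftN_le {f u d} : increasing_convex f -> 0 <= d ->
  f u <= f (u - d) + d * (f (u + 1) - f u).
Proof.
move=> fic d0; have h : u - d <= u <= u + 1 by rewrite gerBl d0 lerDl ler01.
by have := increasing_convex_chord fic h; lra.
Qed.

Lemma increasing_convex_shift_le {f u d} : increasing_convex f -> 0 <= d <= 1 ->
  f (u + d) <= f u + d * (f (u + 1) - f u).
Proof.
move=> fic /andP[d0 d1]; have h : u <= u + d <= u + 1 by rewrite lerD2l d1 lerDl d0.
by have := increasing_convex_chord fic h; lra.
Qed.

End increasing_convex.

Section expectation.
Context {R : realType} {d : measure_display} {T : measurableType d}.
Context {P : probability T R}.
Implicit Types (g h X : T -> R) (A : set T).

Lemma measurable_increasing_convex_comp (f : R -> R) g : increasing_convex f ->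
  measurable_fun setT g -> measurable_fun setT (f \o g).
Proof. by case=> nd _ mg; apply: measurableT_comp => //; exact: nondecreasing_measurable. Qed.

Lemma measurable_sublevel X y : measurable_fun setT X -> measurable [set w | X w <= y].
Proof.
move=> mX; rewrite (_ : [set w | X w <= y] = setT `&` X @^-1` `]-oo, y]).
  by apply: mX => //; exact: measurable_itv.
by apply/seteqP; split => w /=; rewrite in_itv /=; [move=> ->|move=> [_ ->]].
Qed.

Lemma measurable_superlevel X y : measurable_fun setT X -> measurable [set w | y < X w].
Proof.
move=> mX; rewrite (_ : [set w | y < X w] = setT `&` X @^-1` `]y, +oo[).
  by apply: mX => //; exact: measurable_itv.
by apply/seteqP; split => w /=; rewrite in_itv /= andbT; [move=> ->|move=> [_ ->]].
Qed.

Lemma ae_probability1 A : measurable A -> {ae P, forall w, A w} -> P A = 1%E.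
Proof.
move=> mA [N [mN PN AN]].
have : P (~` A) = 0%E.
  apply/eqP; rewrite eq_le measure_ge0 andbT -PN.
  by apply: le_measure; rewrite ?inE//; exact: measurableC.
rewrite probability_setC// -(fineK (fin_num_measure P _ mA)) -EFinB => -[].
by move/eqP; rewrite subr_eq0 => /eqP <-.
Qed.

Lemma probability1_ae A : measurable A -> P A = 1%E -> {ae P, forall w, A w}.
Proof.
move=> mA PA; exists (~` A); split => //; first exact: measurableC.
by rewrite probability_setC// PA subee.
Qed.

Lemma not_ae_false : ~ {ae P, forall w : T, False}.
Proof.
move=> [N [mN PN sub]]; have : (P setT <= P N)%E.
  by apply: le_measure; rewrite ?inE// => w _; exact: sub.
by rewrite PN probability_setT lee_fin ler10.
Qed.

Lemma expectation_ae_le g h : measurable_fun setT g -> measurable_fun setT h ->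
  {ae P, forall w, g w <= h w} -> ('E_P[g] <= 'E_P[h])%E.
Proof.
move=> mg mh gh; rewrite unlock [X in (X <= _)%E]integralE [X in (_ <= X)%E]integralE.
have mg' : measurable_fun setT (EFin \o g) by exact/measurable_EFinP.
have mh' : measurable_fun setT (EFin \o h) by exact/measurable_EFinP.
apply: leeB; apply: ae_ge0_le_integral => //;
  try exact: measurable_funepos; try exact: measurable_funeneg;
  apply: filterS gh => w gw _.
  by rewrite !funeposE; apply: le_max2 => //; rewrite lee_fin.
by rewrite !funenegE; apply: le_max2 => //; rewrite leeN2 lee_fin.
Qed.

Lemma expectation_ae_eq g h : measurable_fun setT g -> measurable_fun setT h ->
  {ae P, forall w, g w = h w} -> ('E_P[g] = 'E_P[h])%E.
Proof.
move=> mg mh gh; apply/eqP; rewrite eq_le !expectation_ae_le//;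
  by apply: filterS gh => w ->.
Qed.

Lemma expectation_le_cst g c : measurable_fun setT g ->
  {ae P, forall w, g w <= c} -> ('E_P[g] <= c%:E)%E.
Proof. by move=> mg gc; rewrite -(expectation_cst P c); exact: expectation_ae_le. Qed.

Lemma expectation_ge_cst g c : measurable_fun setT g ->
  {ae P, forall w, c <= g w} -> (c%:E <= 'E_P[g])%E.
Proof. by move=> mg gc; rewrite -(expectation_cst P c); exact: expectation_ae_le. Qed.

Lemma bounded_Lfun1 g C : measurable_fun setT g ->
  {ae P, forall w, `|g w| <= C} -> g \in Lfun P 1.
Proof.
move=> mg gC; apply/Lfun1_integrable/integrableP; split; first exact/measurable_EFinP.
apply: (@le_lt_trans _ _ (\int[P]_w (cst `|C|%:E) w))%E; last first.
  by rewrite integral_cst// ltey_eq fin_numM// fin_num_measure.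
apply: ae_ge0_le_integral => //.
- by apply: measurableT_comp => //; exact/measurable_EFinP.
- by move=> w _; rewrite lee_fin.
- by apply: filterS gC => w gw _; rewrite lee_fin (le_trans gw (ler_norm _)).
Qed.

Lemma expectation_affine X (a b : R) : X \in Lfun P 1 ->
  ('E_P[fun w => (a * X w + b)%R] = (a * fine 'E_P[X] + b)%:E)%E.
Proof.
move=> XL; rewrite (_ : (fun w => _) = (a \o* X) \+ cst b); last first.
  by apply/funext => w /=; rewrite mulrC.
rewrite expectationD ?Lfun_scale ?Lfun_cst// expectationZl// expectation_cst.
by rewrite -(fineK (expectation_fin_num XL)) /= EFinD EFinM fineK// expectation_fin_num.
Qed.

Lemma expectation_abs_eq0 g : measurable_fun setT g ->
  ('E_P[fun w => `|g w|%R] = 0)%E -> {ae P, forall w, g w = 0}.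
Proof.
move=> mg; rewrite unlock => g0.
have mg' : measurable_fun setT (EFin \o g) by exact/measurable_EFinP.
have /(ae_eq_integral_abs _ measurableT mg') : (\int[P]_w `|(EFin \o g) w| = 0)%E.
  by rewrite -g0; apply: eq_integral => w _.
by apply: filterS => w /(_ I) [].
Qed.

Lemma expectation_gt0 {X} : measurable_fun setT X -> X \in Lfun P 1 ->
  {ae P, forall w, 0 < X w} -> 0 < fine 'E_P[X].
Proof.
move=> mX XL Xpos; have Xfin := expectation_fin_num XL.
have EX_ge0 : (0%:E <= 'E_P[X])%E.
  by apply: expectation_ge_cst => //; apply: filterS Xpos => w /ltW.
rewrite lt_def fine_ge0// andbT; apply/negP => /eqP EX0.
have : ('E_P[fun w => `|X w|%R] = 0)%E.
  rewrite (_ : 0 = 'E_P[X])%E; last by rewrite -(fineK Xfin) EX0.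
  apply: expectation_ae_eq => //; first exact: measurableT_comp.
  by apply: filterS Xpos => w /ltW /ger0_norm.
move/(expectation_abs_eq0 _ mX) => Xeq0; apply: not_ae_false.
by apply: filterS2 Xpos Xeq0 => w /[swap] ->; rewrite ltxx.
Qed.

End expectation.

Section square_integrable.
Context {R : realType} {d : measure_display} {T : measurableType d}.
Context {P : probability T R}.
Implicit Types X : T -> R.

Lemma L2_measurable {X} : L2 P X -> measurable_fun setT X.
Proof. by case. Qed.

Lemma L2_Lfun2 {X} : L2 P X -> X \in Lfun P 2%:E.
Proof.
move=> [mX iX]; rewrite inE; apply/andP; split; first by rewrite inE.
rewrite inE /= /finite_norm unlock /Lnorm; apply: poweR_lty.
have -> : (\int[P]_w `|(EFin \o X) w| `^ 2 = \int[P]_w (X w ^+ 2)%:E)%E.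
  by apply: eq_integral => w _ /=; rewrite powR_mulrn// real_normK// num_real.
move/integrableP: iX => [_]; apply: le_lt_trans; apply: ge0_le_integral => //.
- by move=> w _; rewrite lee_fin sqr_ge0.
- by apply/measurable_EFinP; exact: measurable_funX.
- by apply: measurableT_comp => //; apply/measurable_EFinP; exact: measurable_funX.
- by move=> w _; rewrite gee0_abs// lee_fin sqr_ge0.
Qed.

Lemma Lfun2_L2 {X} : X \in Lfun P 2%:E -> L2 P X.
Proof.
move=> XL; split; last exact: Lfun2_integrable_sqr.
by move: XL; rewrite inE => /andP[]; rewrite inE.
Qed.

Lemma L2_Lfun1 {X} : L2 P X -> X \in Lfun P 1.
Proof. by move/L2_Lfun2; apply: Lfun_subset12; exact: fin_num_measure. Qed.

Lemma L2_cst c : L2 P (cst c).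
Proof. by apply: Lfun2_L2; exact: Lfun_cst. Qed.

Lemma L2_affine {X} (a b : R) : L2 P X -> L2 P (fun w => a * X w + b).
Proof.
move/L2_Lfun2 => XL; apply: Lfun2_L2.
rewrite (_ : (fun w => _) = (a \o* X) \+ cst b); last first.
  by apply/funext => w /=; rewrite mulrC.
apply: rpredD => [|?|?]; first by rewrite lee_fin ler1n.
  by apply: Lfun_scale; rewrite ?ler1n.
exact: Lfun_cst.
Qed.

Lemma variance_affine X (a b : R) : L2 P X ->
  ('V_P[fun w => (a * X w + b)%R] = (a ^+ 2)%:E * 'V_P[X])%E.
Proof.
move/L2_Lfun2 => XL; rewrite (_ : (fun w => _) = (a \o* X) \+ cst b); last first.
  by apply/funext => w /=; rewrite mulrC.
by rewrite varianceD_cst_r ?varianceZ//; apply: Lfun_scale; rewrite ?ler1n.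
Qed.

Lemma variance_eq0 {X} : L2 P X -> ('V_P[X] = 0)%E ->
  {ae P, forall w, X w = fine 'E_P[X]}.
Proof.
move=> XL V0; set c := fine 'E_P[X].
have mXc : measurable_fun setT (fun w => X w - c).
  by apply: measurable_funB; [exact: L2_measurable | exact: measurable_cst].
have : ('E_P[fun w => `|(X w - c) * (X w - c)|%R] = 0)%E.
  rewrite -V0 /variance covariance.unlock; congr expectation; apply/funext => w /=.
  by rewrite ger0_norm // -expr2 sqr_ge0.
move/(expectation_abs_eq0 _ (measurable_funM mXc mXc)).
by apply: filterS => w /eqP; rewrite mulf_eq0 orbb subr_eq0 => /eqP.
Qed.

End square_integrable.

Section bounded_quantile.
Context {R : realType} {d : measure_display} {T : measurableType d}.
Context {P : probability T R} {X : T -> R} {M : R}.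
Hypotheses (mX : measurable_fun setT X) (XM : {ae P, forall w, `|X w| <= M}).

Let F y := P [set w | X w <= y].

Let measurable_F y : measurable [set w | X w <= y].
Proof. exact: measurable_sublevel. Qed.

Lemma cdf_le y y' : y <= y' -> (F y <= F y')%E.
Proof. by move=> yy'; apply: le_measure; rewrite ?inE// => w /= /le_trans; apply. Qed.

Lemma cdf_le1 y : (F y <= 1)%E.
Proof. by rewrite -(probability_setT P); apply: le_measure; rewrite ?inE. Qed.

Lemma cdf_bound : F M = 1%E.
Proof.
by apply: ae_probability1 => //; apply: filterS XM => w; apply: le_trans; exact: ler_norm.
Qed.

Lemma cdf_below_bound y : y < - M -> F y = 0%E.
Proof.
move=> yM; move: XM => [N [mN PN XN]].
apply/eqP; rewrite eq_le measure_ge0 andbT -PN; apply: le_measure; rewrite ?inE//.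
move=> w /= Xy; apply: XN => /=; rewrite ler_norml => /andP[MX _].
by have := le_lt_trans MX (le_lt_trans Xy yM); rewrite ltxx.
Qed.

Lemma quantile_le t y : 0 <= t -> (t%:E < F y)%E -> quantile P X t <= y.
Proof.
move=> t0 ty; apply: ge_inf => //; exists (- M) => y' /= ty'.
rewrite leNgt; apply/negP => /cdf_below_bound Fy'.
by move: ty'; rewrite -/(F y') Fy' lte_fin ltNge t0.
Qed.

Lemma quantile_ge t y : t < 1 ->
  (forall y', (t%:E < F y')%E -> y <= y') -> y <= quantile P X t.
Proof.
by move=> t1 ty; apply: lb_le_inf => //; exists M; rewrite /= -/(F M) cdf_bound lte_fin.
Qed.

Lemma quantile_le_bound t : 0 <= t < 1 -> quantile P X t <= M.
Proof. by case/andP=> t0 t1; apply: quantile_le => //; rewrite cdf_bound lte_fin. Qed.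

Lemma quantile_le_quantile s t : 0 <= s -> s <= t -> t < 1 ->
  quantile P X s <= quantile P X t.
Proof.
move=> s0 st t1; apply: quantile_ge => // y ty; apply: quantile_le => //.
by apply: le_lt_trans ty; rewrite lee_fin.
Qed.

Lemma quantile_cvg : cvg (quantile P X t @[t --> (1:R)^'-]).
Proof.
apply: nondecreasing_at_left_is_cvgr.
- near=> s => u v /andP[su u1] /andP[sv v1] uv; rewrite bnd_simp in su u1 sv v1.
  apply: quantile_le_quantile => //; apply: le_trans (ltW su).
  by apply: ltW; near: s; exact: nbhs_left_gt.
- near=> s; exists M => _ [u /= /andP[su u1] <-].
  move: su u1; rewrite !bnd_simp => su u1.
  apply: quantile_le_bound; rewrite u1 andbT; apply: le_trans (ltW su).
  by apply: ltW; near: s; exact: nbhs_left_gt.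
Unshelve. all: by end_near. Qed.

Lemma quantile_le_quantile1 t : 0 <= t < 1 -> quantile P X t <= quantile1 P X.
Proof.
case/andP=> t0 t1; apply: limr_ge; first exact: quantile_cvg.
near=> s; apply: quantile_le_quantile t0 _ _.
  by near: s; exact: nbhs_left_ge.
by near: s; exact: nbhs_left_lt.
Unshelve. all: by end_near. Qed.

Lemma quantile1_le k : (forall t, 0 <= t < 1 -> quantile P X t <= k) ->
  quantile1 P X <= k.
Proof.
move=> Qk; apply: limr_le; first exact: quantile_cvg.
near=> s; apply: Qk; apply/andP; split.
  by near: s; exact: nbhs_left_ge.
by near: s; exact: nbhs_left_lt.
Unshelve. all: by end_near. Qed.

Lemma cdf_above_quantile1 e : 0 < e -> F (quantile1 P X + e) = 1%E.
Proof.
move=> e0; set y := quantile1 P X + e.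
apply/eqP; rewrite eq_le cdf_le1 /= leNgt; apply/negP => Fy1.
have Fyt : F y = (fine (F y))%:E by rewrite fineK// fin_num_measure.
set t := fine (F y) in Fyt.
have t01 : 0 <= t < 1 by rewrite -!lee_fin -lte_fin -Fyt measure_ge0.
have : y <= quantile P X t.
  apply: quantile_ge => [|y' ty']; first by case/andP: t01.
  rewrite leNgt; apply/negP => /ltW /cdf_le.
  by rewrite Fyt => /(lt_le_trans ty'); rewrite ltxx.
move/le_trans/(_ (quantile_le_quantile1 t t01)).
by rewrite /y gerDl leNgt e0.
Qed.

Lemma ae_le_quantile1 e : 0 < e -> {ae P, forall w, X w <= quantile1 P X + e}.
Proof.
by move=> e0; apply: probability1_ae; [exact: measurable_F | exact: cdf_above_quantile1].
Qed.

Lemma below_quantile1_mass k : k < quantile1 P X ->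
  exists2 k', k < k' & (0 < P [set w | (k' < X w)%R])%E.
Proof.
move=> kQ; set k' := (k + quantile1 P X) / 2.
have [kk' k'Q] : k < k' /\ k' < quantile1 P X by split; rewrite /k'; lra.
have [t t01 k't] : exists2 t, 0 <= t < 1 & k' < quantile P X t.
  apply: contrapT => noT; move: k'Q; rewrite ltNge => /negP; apply.
  apply: quantile1_le => t t01; rewrite leNgt; apply/negP => k't.
  by apply: noT; exists t.
exists k' => //.
have Fk't : (F k' <= t%:E)%E.
  rewrite leNgt; apply/negP => /(quantile_le t k' (andP t01).1).
  by rewrite leNgt k't.
rewrite (_ : [set w | k' < X w] = ~` [set w | X w <= k']); last first.
  by apply/seteqP; split => w /=; rewrite ltNge => /negP.
rewrite probability_setC// -(fineK (fin_num_measure P _ (measurable_F k'))).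
rewrite -EFinB lte_fin subr_gt0 -lte_fin fineK ?fin_num_measure//.
by apply: le_lt_trans Fk't _; rewrite lte_fin; case/andP: t01.
Qed.

End bounded_quantile.

Section beating_performance.
Context {R : realType} {d : measure_display} {T : measurableType d}.
Context {P : probability T R} {X0 : T -> R} {M : R}.
Hypotheses (mX0 : measurable_fun setT X0) (X0M : {ae P, forall w, `|X0 w| <= M}).
Implicit Types (f : R -> R) (Y : T -> R).

Lemma icx_ge_shift Y z : icx_ge P Y (X0 \+ cst z) <-> icx_ge P (Y \- cst z) X0.
Proof.
split=> YX0 f fic.
- have := YX0 _ (increasing_convex_affine 1 (- z) fic ler01).
  rewrite (_ : _ \o (X0 \+ cst z) = f \o X0); last by apply/funext => w /=; rewrite mul1r addrK.
  by rewrite (_ : _ \o Y = f \o (Y \- cst z)) //; apply/funext => w /=; rewrite mul1r.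
- have := YX0 _ (increasing_convex_affine 1 z fic ler01).
  rewrite (_ : _ \o (Y \- cst z) = f \o Y); last by apply/funext => w /=; rewrite mul1r subrK.
  by rewrite (_ : _ \o X0 = f \o (X0 \+ cst z)) //; apply/funext => w /=; rewrite mul1r.
Qed.

Lemma beating_perf_ge {Y m} : icx_ge P (Y \- cst m) X0 -> (m%:E <= beating_perf P X0 Y)%E.
Proof. by move=> YX0; apply: ereal_sup_ubound; exists m. Qed.

Lemma icx_ge_shift_le {Y m m'} : measurable_fun setT Y -> m' <= m ->
  icx_ge P (Y \- cst m) X0 -> icx_ge P (Y \- cst m') X0.
Proof.
move=> mY m'm YX0 f fic; apply: le_trans (YX0 f fic) _.
have mYB u : measurable_fun setT (Y \- cst u).
  by apply: measurable_funB => //; exact: measurable_cst.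
apply: expectation_ae_le; try exact: measurable_increasing_convex_comp.
by apply: aeW => w /=; apply: increasing_convex_le fic _; rewrite lerD2l lerN2.
Qed.

Lemma ae_bound_ge0 : 0 <= M.
Proof.
rewrite leNgt; apply/negP => M0; apply: (not_ae_false (P := P)); apply: filterS X0M => w.
by move/(le_trans (normr_ge0 _)); rewrite leNgt M0.
Qed.

Lemma bounded_icx_comp_Lfun1 f c : increasing_convex f ->
  (fun w => f (X0 w + c)) \in Lfun P 1.
Proof.
move=> fic; apply: (bounded_Lfun1 _ (`|f (- M + c)| + `|f (M + c)|)).
  apply: (measurable_increasing_convex_comp _ (X0 \+ cst c)) => //.
  by apply: measurable_funD => //; exact: measurable_cst.
apply: filterS X0M => w; rewrite ler_norml => /andP[MX XM].
have lo : f (- M + c) <= f (X0 w + c) by apply: increasing_convex_le; rewrite ?lerD2r.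
have hi : f (X0 w + c) <= f (M + c) by apply: increasing_convex_le; rewrite ?lerD2r.
have := ler_norm (- f (- M + c)); rewrite normrN => loN.
have := ler_norm (f (M + c)); have := normr_ge0 (f (- M + c)); have := normr_ge0 (f (M + c)).
by rewrite ler_norml; move=> *; apply/andP; split; lra.
Qed.

Lemma expectation_comp_shiftN_le f dl : increasing_convex f -> 0 <= dl ->
  ('E_P[f \o X0] <= 'E_P[fun w => f (X0 w - dl)%R] + (dl * (f (M + 1) - f (- M)))%:E)%E.
Proof.
move=> fic dl0; rewrite -(expectation_cst P) -expectationD ?Lfun_cst ?bounded_icx_comp_Lfun1//.
apply: expectation_ae_le; first exact: measurable_increasing_convex_comp.
  apply: measurable_funD; last exact: measurable_cst.
  apply: (measurable_increasing_convex_comp _ (X0 \- cst dl)) => //.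
  by apply: measurable_funB => //; exact: measurable_cst.
apply: filterS X0M => w; rewrite ler_norml => /andP[MX XM] /=.
apply: le_trans (increasing_convex_shiftN_le fic dl0) _.
rewrite lerD2l ler_wpM2l// lerB//; apply: increasing_convex_le fic _; lra.
Qed.

Lemma icx_ge_shift_closed {Y z} : measurable_fun setT Y ->
  (forall m, m < z -> icx_ge P (Y \- cst m) X0) -> icx_ge P (Y \- cst z) X0.
Proof.
move=> mY YX0 f fic; apply/lee_addgt0Pr => e e0.
set K := f (M + 1) - f (- M).
have K0 : 0 <= K.
  by rewrite subr_ge0; apply: increasing_convex_le fic _; have := ae_bound_ge0; lra.
have K1 : 0 < K + 1 by lra.
set dl := e / (K + 1).
have dl0 : 0 < dl by rewrite divr_gt0.
have dlK : dl * K <= e by rewrite /dl mulrAC ler_pdivrMr// ler_wpM2l ?(ltW e0)//; lra.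
apply: le_trans (expectation_comp_shiftN_le f dl fic (ltW dl0)) _.
apply: leeD; last by rewrite lee_fin.
have := YX0 (z - dl) _ _ (increasing_convex_affine 1 (- dl) fic ler01).
rewrite gtrBl dl0 => /(_ isT).
rewrite (_ : _ \o X0 = fun w => f (X0 w - dl)); last by apply/funext => w /=; rewrite mul1r.
by rewrite (_ : _ \o (Y \- _) = f \o (Y \- cst z)) //; apply/funext => w /=; congr f; ring.
Qed.

Lemma beating_perf_attained {Y z} : measurable_fun setT Y ->
  (z%:E <= beating_perf P X0 Y)%E -> icx_ge P (Y \- cst z) X0.
Proof.
move=> mY zY; apply: icx_ge_shift_closed => // m mz.
have /ereal_sup_gt[_ [m' YX0 <-]] : (m%:E < beating_perf P X0 Y)%E.
  by apply: lt_le_trans zY; rewrite lte_fin.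
by rewrite lte_fin => mm'; exact: icx_ge_shift_le mY (ltW mm') YX0.
Qed.

Lemma beating_perf_le_mean {Y} : Y \in Lfun P 1 ->
  (beating_perf P X0 Y <= (fine 'E_P[Y] - fine 'E_P[X0])%:E)%E.
Proof.
move=> YL; apply: ge_ereal_sup => _ [m /(_ _ increasing_convex_id) YX0 <-].
have X0L : X0 \in Lfun P 1 := bounded_Lfun1 _ _ mX0 X0M.
move: YX0; rewrite expectationB ?Lfun_cst// expectation_cst.
rewrite -(fineK (expectation_fin_num YL)) -(fineK (expectation_fin_num X0L)).
by rewrite -EFinB !lee_fin; lra.
Qed.

Lemma icx_ge_quantile1 : icx_ge P (cst (quantile1 P X0)) X0.
Proof.
move=> f fic; set Q1 := quantile1 P X0.
rewrite (_ : f \o cst Q1 = cst (f Q1)) // expectation_cst; apply/lee_addgt0Pr => e e0.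
set K := f (Q1 + 1) - f Q1.
have K0 : 0 <= K by rewrite subr_ge0; apply: increasing_convex_le fic _; rewrite lerDl.
have Ke : 0 < K + 1 + e by lra.
set dl := e / (K + 1 + e).
have dl0 : 0 < dl by rewrite divr_gt0.
have dl1 : dl <= 1 by rewrite ler_pdivrMr// mul1r; lra.
have dlK : dl * K <= e by rewrite /dl mulrAC ler_pdivrMr// ler_wpM2l ?(ltW e0)//; lra.
have dl01 : 0 <= dl <= 1 by rewrite (ltW dl0) dl1.
rewrite -EFinD; apply: expectation_le_cst; first exact: measurable_increasing_convex_comp.
apply: filterS (ae_le_quantile1 mX0 X0M _ dl0) => w /= XQ.
apply: le_trans (increasing_convex_le fic XQ) _.
by have := @increasing_convex_shift_le _ _ Q1 _ fic dl01; rewrite -/K; lra.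
Qed.

Lemma quantile1_le_of_icx_ge {W k} : measurable_fun setT W -> icx_ge P W X0 ->
  {ae P, forall w, W w <= k} -> quantile1 P X0 <= k.
Proof.
move=> mW WX0 Wk; rewrite leNgt; apply/negP => /(below_quantile1_mass mX0 X0M _).
move=> [k' kk' mass]; set A := [set w | (k' < X0 w)%R].
have mA : measurable A by exact: measurable_superlevel.
pose f u := Num.max (u - k) 0; have fic : increasing_convex f := increasing_convex_excess k.
have := WX0 _ fic; rewrite (_ : 'E_P[f \o W] = 0)%E; last first.
  apply/eqP; rewrite eq_le; apply/andP; split.
    apply: expectation_le_cst; first exact: measurable_increasing_convex_comp.
    by apply: filterS Wk => w /= Wwk; rewrite ge_max lexx andbT subr_le0.
  apply: expectation_ge_cst; first exact: measurable_increasing_convex_comp.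
  by apply: aeW => w /=; rewrite le_max lexx orbT.
have : ('E_P[fun w => ((k' - k) * \1_A w + 0)%R] <= 'E_P[f \o X0])%E.
  apply: expectation_ae_le; [|exact: measurable_increasing_convex_comp|].
    apply: measurable_funD; last exact: measurable_cst.
    by apply: measurable_funM; [exact: measurable_cst | exact: measurable_indic].
  apply: aeW => w /=; rewrite indicE addr0.
  case: (boolP (w \in A)) => wA; rewrite ?mulr1 ?mulr0 le_max ?lexx ?orbT//.
  by rewrite lerB// ltW//; move: wA; rewrite inE.
have AL : \1_A \in Lfun P 1.
  apply: (bounded_Lfun1 _ 1); first exact: measurable_indic.
  by apply: aeW => w; rewrite indicE; case: (w \in A); rewrite ?normr1 ?normr0.
rewrite expectation_affine// expectation_indic//.
move=> /le_trans /[apply]; rewrite addr0 lee_fin leNgt => /negP; apply.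
by rewrite mulr_gt0 ?subr_gt0// -lte_fin fineK// fin_num_measure.
Qed.

Lemma icx_ge_shrink {Y m z c l} : 0 <= l <= 1 -> l * (m - c + M) <= m - z ->
  icx_ge P (Y \- cst m) X0 -> icx_ge P ((fun w => (1 - l) * Y w + l * c) \- cst z) X0.
Proof.
move=> /andP[l0 l1] lz YX0 f fic; set c' := (1 - l) * m + l * c - z.
have gic : increasing_convex (fun u => f ((1 - l) * u + c')).
  by apply: increasing_convex_affine; rewrite ?subr_ge0.
have := YX0 _ gic.
rewrite (_ : _ \o (Y \- cst m) = f \o ((fun w => (1 - l) * Y w + l * c) \- cst z)); last first.
  by apply/funext => w /=; congr f; rewrite /c'; ring.
apply: le_trans; apply: expectation_ae_le; try exact: measurable_increasing_convex_comp.
apply: filterS X0M => w; rewrite ler_norml => /andP[_ XM] /=.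
have : l * X0 w <= l * M by rewrite ler_wpM2l.
by move=> lXM; apply: increasing_convex_le fic _; rewrite /c'; lra.
Qed.

End beating_performance.

Lemma exists_shrink_factor {R : realFieldType} (a b : R) : 0 < a ->
  exists2 l : R, 0 < l < 1 & l * b <= a.
Proof.
move=> a0; have D0 : 0 < a + `|b| + 1 by rewrite -addrA ltr_wpDr// ltr_wpDl.
exists (a / (a + `|b| + 1)).
  by rewrite divr_gt0//= ltr_pdivrMr// mul1r -addrA ltrDl ltr_wpDl.
by rewrite mulrAC ler_pdivrMr// ler_pM2l//; have := ler_norm b; lra.
Qed.

Section BPV_efficiency.
Context {R : realType} {d : measure_display} {T : measurableType d}.
Context {P : probability T R} {rho X0 : T -> R} {M x : R}.
Hypotheses (mX0 : measurable_fun setT X0) (X0M : {ae P, forall w, `|X0 w| <= M}).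
Hypotheses (rhoL2 : L2 P rho) (Erho_gt0 : 0 < fine 'E_P[rho]).
Implicit Types X Y : T -> R.

Let e := fine 'E_P[rho].
Let Q1 := quantile1 P X0.

Lemma expectation_rho_cst c : ('E_P[rho \* cst c] = (c * e)%:E)%E.
Proof.
rewrite (_ : rho \* cst c = fun w => c * rho w + 0); last first.
  by apply/funext => w /=; rewrite addr0 mulrC.
by rewrite expectation_affine ?addr0 ?L2_Lfun1.
Qed.

Lemma budget_cst : budget P rho x (cst (x / e)).
Proof. by split; [exact: L2_cst | rewrite expectation_rho_cst divfK ?gt_eqF]. Qed.

Lemma beating_perf_cst c : ((c - Q1)%:E <= beating_perf P X0 (cst c))%E.
Proof.
apply: beating_perf_ge; rewrite (_ : _ \- _ = cst Q1); first exact: icx_ge_quantile1 mX0 X0M.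
by apply/funext => w /=; rewrite opprB addrC subrK.
Qed.

Lemma BPV_efficient_beating_perf_ge {X} : BPV_efficient P rho x X0 X ->
  ((x / e - Q1)%:E <= beating_perf P X0 X)%E.
Proof.
move=> [_ noY]; rewrite leNgt; apply/negP => lt; apply: noY.
exists (cst (x / e)); split; first exact: budget_cst.
- exact: ltW (lt_le_trans lt (beating_perf_cst _)).
- by rewrite variance_cst variance_ge0.
- by left; exact: lt_le_trans lt (beating_perf_cst _).
Qed.

Lemma BPV_efficient_variance_minimal {X} : BPV_efficient P rho x X0 X ->
  exists z, x / e - Q1 <= z /\ variance_minimal P (budget_icx P rho x (X0 \+ cst z)) X.
Proof.
move=> eff; have [[XL2 Xcost] noY] := eff; have XL1 := L2_Lfun1 XL2.
have lb := BPV_efficient_beating_perf_ge eff.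
have ub := beating_perf_le_mean mX0 X0M XL1.
have Xfin : beating_perf P X0 X \is a fin_num.
  by rewrite fin_numElt (lt_le_trans _ lb) ?ltNyr// (le_lt_trans ub) ?ltry.
exists (fine (beating_perf P X0 X)); rewrite -lee_fin fineK//; split=> //.
split=> [|Y [YL2 [Ycost YX0]]].
  split=> //; split=> //; apply/icx_ge_shift.
  by apply: (beating_perf_attained mX0 X0M (L2_measurable XL2)); rewrite fineK.
rewrite leNgt; apply/negP => VY; apply: noY; exists Y; split=> //; last by right.
- by rewrite -(fineK Xfin); apply: beating_perf_ge; exact/icx_ge_shift.
- exact: ltW.
Qed.

Lemma budget_variance_eq0_le {Y m} : budget P rho x Y -> ('V_P[Y] = 0)%E ->
  icx_ge P (Y \- cst m) X0 -> m <= x / e - Q1.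
Proof.
move=> [YL2 Ycost] V0 YX0; set c := fine 'E_P[Y].
have mY := L2_measurable YL2; have Yc := variance_eq0 YL2 V0.
have : c * e <= x.
  rewrite -lee_fin -expectation_rho_cst (_ : 'E_P[_] = 'E_P[rho \* Y])%E//.
  have mrho := L2_measurable rhoL2.
  apply: expectation_ae_eq; try by apply: measurable_funM => //; exact: measurable_cst.
  by apply: filterS Yc => w /= ->.
rewrite -ler_pdivlMr// => ce.
have : Q1 <= c - m.
  apply: (quantile1_le_of_icx_ge mX0 X0M _ YX0).
    by apply: measurable_funB => //; exact: measurable_cst.
  by apply: filterS Yc => w /= ->.
lra.
Qed.

Lemma budget_shrink {Y l} : 0 <= l <= 1 -> budget P rho x Y ->
  budget P rho x (fun w => (1 - l) * Y w + l * (x / e)).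
Proof.
move=> /andP[l0 l1] [YL2 Ycost]; split; first exact: L2_affine.
have rYL := Lfun2_mul_Lfun1 (L2_Lfun2 rhoL2) (L2_Lfun2 YL2).
rewrite (_ : rho \* _ = ((1 - l) \o* (rho \* Y)) \+ ((l * (x / e)) \o* rho)); last first.
  by apply/funext => w /=; ring.
have rL := L2_Lfun1 rhoL2.
rewrite expectationD ?Lfun_scale// !expectationZl//.
move: Ycost; rewrite -(fineK (expectation_fin_num rYL)) -(fineK (expectation_fin_num rL)) -/e.
rewrite -!EFinM -EFinD !lee_fin -mulrA divfK ?gt_eqF// => Ycost.
have : (1 - l) * fine 'E_P[rho \* Y] <= (1 - l) * x by rewrite ler_wpM2l ?subr_ge0.
lra.
Qed.

Lemma budget_icx_variance_lt {Y z m} : x / e - Q1 <= z -> z < m ->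
  budget P rho x Y -> icx_ge P (Y \- cst m) X0 ->
  exists2 Y', budget_icx P rho x (X0 \+ cst z) Y' & ('V_P[Y'] < 'V_P[Y])%E.
Proof.
move=> zQ zm [YL2 Ycost] YX0.
have [V0|V0] := eqVneq 'V_P[Y] 0%E.
  by have := budget_variance_eq0_le (conj YL2 Ycost) V0 YX0; lra.
have mz : 0 < m - z by rewrite subr_gt0.
have [l /andP[l0 l1] lz] := exists_shrink_factor _ (m - x / e + M) mz.
have l01 : 0 <= l <= 1 by rewrite !ltW.
exists (fun w => (1 - l) * Y w + l * (x / e)).
  move: (budget_shrink l01 (conj YL2 Ycost)) => [Y'L2 Y'cost].
  by split=> //; split=> //; apply/icx_ge_shift; apply: (icx_ge_shrink mX0 X0M l01 lz YX0).
have Vfin := variance_fin_num (L2_Lfun2 YL2).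
have VY : 0 < fine 'V_P[Y] by rewrite lt_def fine_ge0 ?variance_ge0// andbT fine_eq0.
rewrite (variance_affine Y (1 - l) (l * (x / e)))// -(fineK Vfin) -EFinM lte_fin.
by rewrite gtr_pMl// expr2; nra.
Qed.

Lemma variance_minimal_BPV_efficient {X z} : x / e - Q1 <= z ->
  variance_minimal P (budget_icx P rho x (X0 \+ cst z)) X -> BPV_efficient P rho x X0 X.
Proof.
move=> zQ [[XL2 [Xcost XX0]] Xmin]; split=> // -[Y [[YL2 Ycost] XY VYX strict]].
have zX : (z%:E <= beating_perf P X0 X)%E by apply: beating_perf_ge; exact/icx_ge_shift.
have VXY : ('V_P[X] <= 'V_P[Y])%E.
  apply: Xmin; split=> //; split=> //; apply/icx_ge_shift.
  exact: (beating_perf_attained mX0 X0M (L2_measurable YL2) (le_trans zX XY)).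
case: strict => [XltY|]; last by rewrite ltNge VXY.
have /ereal_sup_gt[_ [m YX0 <-]] := le_lt_trans zX XltY; rewrite lte_fin => zm.
have [Y' Y'S Y'Y] := budget_icx_variance_lt zQ zm (conj YL2 Ycost) YX0.
by have := lt_le_trans Y'Y (le_trans VYX (Xmin _ Y'S)); rewrite ltxx.
Qed.

End BPV_efficiency.

Theorem proposition8p1 (R : realType) (d : measure_display) (T : measurableType d)
    (P : probability T R) (rho X0 : T -> R) (x : R)
    (HPcomplete : measure_is_complete P)
    (HPnonatomic : nonatomic P)
    (Hrho2 : L2 P rho)
    (Hrhopos : P [set w | 0 < rho w] = 1%E)
    (Hrhovar : (0 < 'V_P[rho])%E)
    (HX0 : Linfty P X0)
    (Xstar : T -> R) :
  BPV_efficient P rho x X0 Xstar <->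
  exists z : R, x / fine 'E_P[rho] - quantile1 P X0 <= z /\
    variance_minimal P (budget_icx P rho x (X0 \+ cst z)) Xstar.
Proof.
have [mX0 [M X0M]] := HX0; have mrho := L2_measurable Hrho2.
have Erho_gt0 : 0 < fine 'E_P[rho].
  apply: (expectation_gt0 mrho (L2_Lfun1 Hrho2)).
  by apply: probability1_ae Hrhopos; exact: measurable_superlevel.
split=> [eff|[z [zQ Xmin]]].
  exact: (BPV_efficient_variance_minimal mX0 X0M Hrho2 Erho_gt0 eff).
exact: (variance_minimal_BPV_efficient mX0 X0M Hrho2 Erho_gt0 zQ Xmin).
Qed.
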